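(* Let $n\ge3$ and $k\ge0$ be integers with $k<n\le 2k$. If $S\subseteq\mathrm{Inc}(A,B)$ is an independent set in $G_n^k$ that is not reversible, then \[|S|\le 2+\frac{(2k+2-n)(2k+1-n)}{2}.\]
   Context: For integers $n\ge3$, $k\ge0$, the crown $S_n^k$ is the poset with ground set $A\cup B$, $A=\{a_1,\dots,a_{n+k}\}$, $B=\{b_1,\dots,b_{n+k}\}$, indices cyclic modulo $n+k$; elements of $A$ are pairwise incomparable, as are elements of $B$, and $a_i$ is incomparable to $b_j$ when $j\in\{i,i+1,\dots,i+k\}$ (mod $n+k$), while $a_i<b_j$ otherwise. $\mathrm{Inc}(A,B)$ is the set of pairs $(a,b)\in A\times B$ with $a$ incomparable to $b$. The graph $G_n^k$ has vertex set $\mathrm{Inc}(A,B)$, with $(a,b)$ adjacent to $(x,y)$ iff $a<y$ and $x<b$ in $S_n^k$. A set $R\subseteq\mathrm{Inc}(A,B)$ is reversible if there is a linear extension $L$ of $S_n^k$ with $b<a$ in $L$ for all $(a,b)\in R$. *)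

From mathcomp Require Import all_boot all_order.
Set Implicit Arguments. Unset Strict Implicit. Unset Printing Implicit Defensive.

(* Crown S_n^k with N = n+k: ground set A + B, a_i = inl i, b_j = inr j,
   i, j : 'I_(n+k). *)
Definition crown (n k : nat) : finType := ('I_(n + k) + 'I_(n + k))%type.

Definition cdist (N : nat) (i j : 'I_N) : nat := (j + N - i) %% N.

(* a_i is incomparable to b_j iff j in {i, i+1, ..., i+k} mod (n+k) *)
Definition incAB (n k : nat) (i j : 'I_(n + k)) : bool := cdist i j <= k.
Arguments incAB : clear implicits.

Definition crown_lt (n k : nat) (x y : crown n k) : bool :=
  match x, y with
  | inl i, inr j => ~~ incAB n k i j
  | _, _ => false
  end.

(* Inc(A,B), as pairs of indices (i,j) standing for (a_i, b_j) *)
Definition Inc (n k : nat) : {set 'I_(n + k) * 'I_(n + k)} :=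
  [set p | incAB n k p.1 p.2].

Definition Gadj (n k : nat) (u v : 'I_(n + k) * 'I_(n + k)) : bool :=
  crown_lt (inl u.1 : crown n k) (inr v.2) && crown_lt (inl v.1 : crown n k) (inr u.2).

Definition independent (n k : nat) (S : {set 'I_(n + k) * 'I_(n + k)}) : Prop :=
  S \subset Inc n k /\ forall u v, u \in S -> v \in S -> ~~ Gadj u v.

Definition linear_extension (n k : nat) (L : rel (crown n k)) : Prop :=
  [/\ reflexive L, antisymmetric L, transitive L, total L &
      forall x y, crown_lt x y -> L x y].

Definition reversible (n k : nat) (R : {set 'I_(n + k) * 'I_(n + k)}) : Prop :=
  exists L : rel (crown n k), linear_extension L /\
    forall p, p \in R -> L (inr p.2) (inl p.1) && (inr p.2 != inl p.1 :> crown n k).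

From mathcomp Require Import all_boot all_order zify.
Set Implicit Arguments. Unset Strict Implicit. Unset Printing Implicit Defensive.

(* Write [u -> v] for [a_(u.1) < b_(v.2)]. When [k < n] every directed path of
   three arcs through incomparable pairs has a chord, so if [S] carries no
   directed triangle, "reachable in one or two arcs" is closed under appending
   an arc; ranking the pairs of [S] by their number of predecessors then gives
   heights for a linear extension putting every [b_(u.2)] below [a_(u.1)].
   Hence a non-reversible [S] contains a triangle [u1 -> u2 -> u3 -> u1].
   Rotating the crown and, if needed, applying the order-reversing duality
   [a_i |-> b_(i+k)], [b_j |-> a_j], we may assume [u3.2 = k] and
   [b1 < k < b2 <= 2k], [b1 + n <= b2] for [b1 = u1.2], [b2 = u2.2].
   Independence then forces every pair of [S] to be an interval [[a, b]] inside
   one of the windows [[0, b2 - n]], [[b2 - k, k + b1]], [[n + b1, 2k]], of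
   total length [M = 4k + 3 - 2n]. Lay the windows end to end and double the
   coordinates: a covered point [t] of a window takes the slot [2 t] and a
   covered edge [(t, t + 1)] the slot [2 t + 1], modulo [M]. Points and edges
   of different windows never share a slot, since two intervals through them
   would be adjacent in [G]. Finally, a family of intervals whose union has
   [c] points and [d] edges has at most [(d + 1)(d + 2)/2 + c - d - 1]
   members, and optimizing over the three windows subject to
   [sum (c_i + d_i) <= M] gives the bound. *)

(** * Cyclic distance *)

Definition cdistn (N x y : nat) : nat := if x <= y then y - x else y + N - x.

Lemma cdist_cdistn N (i j : 'I_N) : cdist i j = cdistn N i j.
Proof.
rewrite /cdist /cdistn; have := ltn_ord i; have := ltn_ord j.
case: (leqP i j) => hij hj hi; last by rewrite modn_small; lia.
have -> : j + N - i = (j - i) + N by lia.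
by rewrite modnDr modn_small; lia.
Qed.

Lemma cdistn_le_inside N k x y : x + k < N -> y < N ->
  (cdistn N x y <= k) = (x <= y <= x + k).
Proof. by move=> *; rewrite /cdistn; case: (leqP x y) => /= ?; apply/idP/idP; lia. Qed.

Lemma cdistn_le_wrap N k x y : x < N -> N <= x + k -> y < N ->
  (cdistn N x y <= k) = (x <= y) || (y + N <= x + k).
Proof. by move=> *; rewrite /cdistn; case: (leqP x y) => /= ?; apply/idP/idP; lia. Qed.

Ltac case_window N k x := case: (ltnP (x + k) N) => ?;
  [rewrite ?(@cdistn_le_inside N k x) // | rewrite ?(@cdistn_le_wrap N k x) //].

Lemma modn_lt_double a N : a < N + N -> a %% N = if a < N then a else a - N.
Proof.
move=> h; case: ifP => h2; first by rewrite modn_small.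
have -> : a = (a - N) + N by lia.
by rewrite modnDr modn_small; lia.
Qed.

Lemma eq_modn_lt_double N x y : x < N + N -> y < N + N -> x %% N = y %% N ->
  x = y \/ x = y + N \/ y = x + N.
Proof.
move=> hx hy; rewrite (modn_lt_double hx) (modn_lt_double hy).
by case: ifP => ?; case: ifP => ?; lia.
Qed.

Lemma cdistn_addK N x y : x < N -> y < N -> (x + cdistn N x y) %% N = y.
Proof.
move=> hx hy; rewrite /cdistn; case: (leqP x y) => h; first by rewrite modn_small; lia.
by rewrite modn_lt_double; [case: ifP; lia | lia].
Qed.

Lemma cdistn_uniq N x y d : x < N -> y < N -> d < N -> (x + d) %% N = y -> cdistn N x y = d.
Proof.
move=> hx hy hd; rewrite modn_lt_double; last lia.
by rewrite /cdistn; case: ifP => ? ?; case: (leqP x y) => ?; lia.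
Qed.

Lemma cdistn_lt N x y : x < N -> y < N -> cdistn N x y < N.
Proof. by rewrite /cdistn; case: ifP; lia. Qed.

Lemma cdistn_rot N c x y : x < N -> y < N ->
  cdistn N ((x + c) %% N) ((y + c) %% N) = cdistn N x y.
Proof.
move=> hx hy; have N_gt0 : 0 < N by lia.
apply: cdistn_uniq; rewrite ?ltn_pmod ?cdistn_lt //.
by rewrite modnDml -addnA (addnC c) addnA -modnDml cdistn_addK.
Qed.

Lemma cdistn_twist N k x y : x < N -> y < N -> k < N ->
  (cdistn N y ((x + k) %% N) <= k) = (cdistn N x y <= k).
Proof.
move=> hx hy hk; have N_gt0 : 0 < N by lia.
have := cdistn_addK hx hy; have := cdistn_lt hx hy.
move: (cdistn N x y) => d hd hxd.
have hxk : (x + k) %% N < N by rewrite ltn_pmod.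
case: (leqP d k) => hdk.
- have -> : cdistn N y ((x + k) %% N) = k - d.
    apply: cdistn_uniq; rewrite ?hxk //; first lia.
    by rewrite -hxd modnDml -addnA subnKC.
  by apply/idP/idP; lia.
- have -> : cdistn N y ((x + k) %% N) = N + k - d.
    apply: cdistn_uniq; rewrite ?hxk //; first lia.
    rewrite -hxd modnDml -addnA.
    have -> : x + (d + (N + k - d)) = (x + k) + N by lia.
    by rewrite modnDr.
  by apply/idP/idP; lia.
Qed.

(* Each [a_i] is incomparable to only [k + 1 <= N - k] consecutive [b_j], so a
   path of three arcs through incomparable pairs always has a chord. *)
Lemma chord_cdistn N k a1 b1 a2 b2 a3 b3 b4 : 2 * k < N ->
  a1 < N -> a2 < N -> a3 < N -> b1 < N -> b2 < N -> b3 < N -> b4 < N ->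
  cdistn N a1 b1 <= k -> cdistn N a2 b2 <= k -> cdistn N a3 b3 <= k ->
  k < cdistn N a1 b2 -> k < cdistn N a2 b3 -> k < cdistn N a3 b4 ->
  cdistn N a2 b1 <= k -> cdistn N a3 b2 <= k -> cdistn N a3 b1 <= k ->
  cdistn N a1 b3 <= k -> cdistn N a2 b4 <= k -> cdistn N a1 b4 <= k -> False.
Proof.
move=> ? ? ? ? ? ? ? ?; rewrite !ltnNge.
case_window N k a1; case_window N k a2; case_window N k a3; lia.
Qed.

(** * Families of intervals *)

Section IntervalFamilies.
Variable B : nat.
Local Notation P := ('I_B * 'I_B)%type.
Implicit Types Y Z : {set P}.

Definition covered Y : {set 'I_B} := [set t : 'I_B | [exists p in Y, p.1 <= t <= p.2]].

Definition covered_edges Y : {set 'I_B} := [set t : 'I_B | [exists p in Y, p.1 <= t < p.2]].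

Lemma covered_subset Y Z : Y \subset Z -> covered Y \subset covered Z.
Proof.
move=> /subsetP YZ; apply/subsetP => t; rewrite !inE => /existsP [p /andP [/YZ pZ tp]].
by apply/existsP; exists p; rewrite pZ.
Qed.

Lemma covered_edges_subset Y Z : Y \subset Z -> covered_edges Y \subset covered_edges Z.
Proof.
move=> /subsetP YZ; apply/subsetP => t; rewrite !inE => /existsP [p /andP [/YZ pZ tp]].
by apply/existsP; exists p; rewrite pZ.
Qed.

Lemma card_covered_edges_lt Y p0 : p0 \in Y -> (forall p : P, p \in Y -> p.1 <= p.2) ->
  #|covered_edges Y| < #|covered Y|.
Proof.
move=> p0Y Y_wf.
have end_covered p : p \in Y -> p.2 \in covered Y.
  by move=> pY; rewrite inE; apply/existsP; exists p; rewrite pY (Y_wf _ pY) leqnn.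
pose tmax := [arg max_(t > p0.2 in covered Y) (t : nat)].
have [tmaxY tmax_max] : tmax \in covered Y /\ {in covered Y, forall t : 'I_B, t <= tmax}.
  by rewrite /tmax; case: arg_maxnP => [|t tY t_max]; [exact: end_covered | split=> // u /t_max].
apply/proper_card/properP; split.
  apply/subsetP => t; rewrite !inE => /existsP [p /andP [pY /andP [p1t tp2]]].
  by apply/existsP; exists p; rewrite pY p1t ltnW.
exists tmax => //; rewrite inE; apply/existsP => -[q /andP [qY /andP [_ tq2]]].
by have := tmax_max _ (end_covered q qY); lia.
Qed.

Lemma intervals_bound_step s b c z b' c' :
  2 * (s + b + 1) <= (b + 2) * (b + 1) + 2 * c ->
  b <= b' -> c <= c' -> z <= b' + 1 -> (b' = b -> z <= 1) -> (0 < z -> c < c') ->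
  2 * (s + z + b' + 1) <= (b' + 2) * (b' + 1) + 2 * c'.
Proof.
move=> IH bb' cc' zb' zb z_gt0.
case: (posnP z) => [-> | /z_gt0 cc'']; first nia.
case: (ltngtP b' b) => [|b_lt_b'|b'b]; [lia | | by have := zb b'b; rewrite b'b; nia].
have : 2 * b' + 2 * (b' - b) <= (b' - b) * (b' + b + 3) by nia.
have : (b' + 2) * (b' + 1) = (b + 2) * (b + 1) + (b' - b) * (b' + b + 3) by nia.
nia.
Qed.

Section Counting.
Variable Y : {set P}.
Hypothesis Y_wf : forall p : P, p \in Y -> p.1 <= p.2.

Definition ends_before (x : nat) : {set P} := [set p in Y | p.2 < x].
Definition ends_at (x : 'I_B) : {set P} := [set p in Y | p.2 == x :> nat].

Lemma card_ends_before_succ (x : 'I_B) :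
  #|ends_before x.+1| = #|ends_before x| + #|ends_at x|.
Proof.
have -> : ends_before x.+1 = ends_before x :|: ends_at x.
  apply/setP => p; rewrite !inE ltnS leq_eqVlt.
  by case: (p \in Y); rewrite //= orbC.
rewrite cardsU; have -> : ends_before x :&: ends_at x = set0.
  by apply/setP => p; rewrite !inE; case: (p \in Y) => //=; apply/negbTE; lia.
by rewrite cards0 subn0.
Qed.

Lemma card_ends_at_le (x : 'I_B) : #|ends_at x| <= #|covered_edges (ends_before x.+1)| + 1.
Proof.
have inj1 : {in ends_at x &, injective (fun p : P => p.1)}.
  move=> p q; rewrite !inE => /andP [_ /eqP p2] /andP [_ /eqP q2] pq.
  by apply/injective_projections => //; apply/val_inj; rewrite /= p2 q2.
apply: (@leq_trans #|x |: covered_edges (ends_before x.+1)|); last first.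
  by rewrite cardsU1 addnC leq_add2l leq_b1.
rewrite -(card_in_imset inj1); apply/subset_leq_card/subsetP => _ /imsetP [p pZ ->].
move: (pZ); rewrite !inE => /andP [pY /eqP p2].
case: (ltngtP p.1 x) => [p1x | x_p1 | /val_inj ->]; last by rewrite eqxx.
- apply/orP; right; apply/existsP; exists p.
  by rewrite !inE pY p2 ltnSn leqnn p1x.
- by have := Y_wf pY; rewrite p2 leqNgt x_p1.
Qed.

(* An interval ending at [x] with left end [< x] would contribute the new
   edge [x - 1]. *)
Lemma card_ends_at_le1 (x : 'I_B) :
  #|covered_edges (ends_before x.+1)| <= #|covered_edges (ends_before x)| -> #|ends_at x| <= 1.
Proof.
move=> no_new_edge.
have sub : ends_before x \subset ends_before x.+1.
  by apply/subsetP => p; rewrite !inE => /andP [-> /ltnW].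
have same : covered_edges (ends_before x) = covered_edges (ends_before x.+1).
  by apply/eqP; rewrite eqEcard covered_edges_subset.
have point p : p \in ends_at x -> p = (x, x).
  move=> pZ; move: (pZ); rewrite !inE => /andP [pY /eqP p2].
  case: (ltngtP p.1 x) => [p1x | x_p1 | p1x].
  - have x1_lt : x - 1 < B by have := ltn_ord x; lia.
    have : Ordinal x1_lt \in covered_edges (ends_before x.+1).
      rewrite inE; apply/existsP; exists p; rewrite !inE pY p2 ltnSn /=.
      by move: p1x; case: (nat_of_ord x) => // y; rewrite subn1 /= ltnS ltnSn andbT.
    rewrite -same inE => /existsP [q]; rewrite !inE /= => /andP [/andP [_ q2] /andP [_ q2']].
    by exfalso; lia.
  - by have := Y_wf pY; rewrite p2 leqNgt x_p1.
  - by apply/injective_projections; apply: val_inj.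
rewrite -(cards1 (x, x)); apply/subset_leq_card/subsetP => p /point ->.
by rewrite inE.
Qed.

Lemma covered_grows (x : 'I_B) : 0 < #|ends_at x| ->
  #|covered (ends_before x)| < #|covered (ends_before x.+1)|.
Proof.
move=> /card_gt0P [p pZ]; move: (pZ); rewrite !inE => /andP [pY /eqP p2].
apply/proper_card/properP; split.
  by apply/covered_subset/subsetP => q; rewrite !inE => /andP [-> /ltnW].
exists x.
  by rewrite inE; apply/existsP; exists p; rewrite !inE pY p2 ltnSn leqnn -p2 Y_wf.
by rewrite inE; apply/existsP => -[q]; rewrite !inE => /andP [/andP [_ q2] /andP [_ xq]]; lia.
Qed.

(* The intervals inside a block of [e] consecutive covered edges number at most
   [(e + 1)(e + 2)/2], and there are [#|covered Y| - #|covered_edges Y|] blocks. *)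
Lemma card_intervals_bound :
  2 * (#|Y| + #|covered_edges Y| + 1) <=
  (#|covered_edges Y| + 2) * (#|covered_edges Y| + 1) + 2 * #|covered Y|.
Proof.
pose bound (Z : {set P}) := 2 * (#|Z| + #|covered_edges Z| + 1) <=
  (#|covered_edges Z| + 2) * (#|covered_edges Z| + 1) + 2 * #|covered Z|.
suff /(_ B (leqnn B)) : forall x, x <= B -> bound (ends_before x).
  by rewrite (_ : ends_before B = Y) //; apply/setP => p; rewrite !inE ltn_ord andbT.
elim=> [_ | x IH x_lt]; rewrite /bound.
  have -> : ends_before 0 = set0 by apply/setP => p; rewrite !inE ltn0 andbF.
  have -> : covered set0 = set0.
    by apply/setP => t; rewrite !inE; apply/existsP => -[p]; rewrite inE.
  have -> : covered_edges set0 = set0.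
    by apply/setP => t; rewrite !inE; apply/existsP => -[p]; rewrite inE.
  by rewrite !cards0.
pose xo := Ordinal x_lt.
have sub : ends_before xo \subset ends_before xo.+1.
  by apply/subsetP => p; rewrite !inE => /andP [-> /ltnW].
rewrite (card_ends_before_succ xo).
apply: intervals_bound_step (IH (ltnW x_lt)) _ _ (card_ends_at_le xo) _ (covered_grows (x := xo)).
- exact/subset_leq_card/covered_edges_subset.
- exact/subset_leq_card/covered_subset.
- by move=> same; apply: card_ends_at_le1; rewrite same.
Qed.

End Counting.
End IntervalFamilies.

(** * Triangle-free sets are reversible *)

Section LexHeight.
Variables (T : finType) (h : T -> nat).

Definition lex_height : rel T :=
  fun x y => (h x < h y) || (h x == h y) && (enum_rank x <= enum_rank y).

Lemma lex_height_refl : reflexive lex_height.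
Proof. by move=> x; rewrite /lex_height eqxx leqnn orbT. Qed.

Lemma lex_height_anti : antisymmetric lex_height.
Proof.
move=> x y; rewrite /lex_height; case: (ltngtP (h x) (h y)) => //= _ /andP [hxy hyx].
by apply/enum_rank_inj/val_inj/eqP; rewrite eqn_leq hxy hyx.
Qed.

Lemma lex_height_trans : transitive lex_height.
Proof.
move=> y x z; rewrite /lex_height.
case: (ltngtP (h x) (h y)) => /= hxy; case: (ltngtP (h y) (h z)) => //= hyz.
- by rewrite (ltn_trans hxy hyz).
- by rewrite -hyz hxy.
- by rewrite hxy hyz.
- by rewrite hxy hyz eqxx ltnn; apply: leq_trans.
Qed.

Lemma lex_height_total : total lex_height.
Proof.
by move=> x y; rewrite /lex_height; case: (ltngtP (h x) (h y)) => //= _; apply: leq_total.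
Qed.

End LexHeight.

Section Crown.
Variables n k : nat.
Local Notation N := (n + k).
Local Notation P := ('I_N * 'I_N)%type.

Lemma incAB_cdistn (i j : 'I_N) : incAB n k i j = (cdistn N i j <= k).
Proof. by rewrite /incAB cdist_cdistn. Qed.

Definition lt_ab (u v : P) : bool := ~~ incAB n k u.1 v.2.

Lemma independentP (S : {set P}) : independent S ->
  {in S, forall u, incAB n k u.1 u.2} /\ {in S &, forall u v, lt_ab u v -> ~~ lt_ab v u}.
Proof.
case=> /subsetP sub noedge; split=> [u /sub|u v uS vS uv]; first by rewrite inE.
by have := noedge u v uS vS; rewrite /Gadj /= -/(lt_ab u v) -/(lt_ab v u) uv.
Qed.

Lemma lt_ab_chord (x z v p : P) : k < n ->
  incAB n k x.1 x.2 -> incAB n k z.1 z.2 -> incAB n k v.1 v.2 ->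
  lt_ab x z -> lt_ab z v -> lt_ab v p -> ~~ lt_ab z x -> ~~ lt_ab v z -> ~~ lt_ab v x ->
  [|| lt_ab x v, lt_ab z p | lt_ab x p].
Proof.
rewrite /lt_ab !incAB_cdistn !negbK -!ltnNge => *.
apply: contraT; rewrite !negb_or -!leqNgt => /and3P [*].
exfalso; apply: (@chord_cdistn N k x.1 x.2 z.1 z.2 v.1 v.2 p.2) => //; lia.
Qed.

Definition triangle (S : {set P}) (p q r : P) : bool :=
  [&& p \in S, q \in S, r \in S, lt_ab p q, lt_ab q r & lt_ab r p].

Section TriangleFree.
Variable S : {set P}.
Hypotheses (k_lt_n : k < n) (indepS : independent S)
  (triangle_free : forall p q r, ~~ triangle S p q r).

Definition reach2 (u v : P) : bool := lt_ab u v || [exists z in S, lt_ab u z && lt_ab z v].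

Definition rank (u : P) : nat := #|[set v in S | reach2 v u]|.

Lemma reach2_snoc x v p : x \in S -> v \in S -> p \in S ->
  reach2 x v -> lt_ab v p -> reach2 x p.
Proof.
have [incS asymS] := independentP indepS.
move=> xS vS pS /orP [xv|/existsP [z /and3P [zS xz zv]]] vp.
  by apply/orP; right; apply/existsP; exists v; rewrite vS xv vp.
have zx : ~~ lt_ab z x by apply: asymS.
have vz : ~~ lt_ab v z by apply: asymS.
have vx : ~~ lt_ab v x.
  by apply: contraT => /negbNE vx; have := triangle_free x z v; rewrite /triangle xS zS vS xz zv vx.
case/or3P: (lt_ab_chord k_lt_n (incS x xS) (incS z zS) (incS v vS) xz zv vp zx vz vx).
- by move=> xv; apply/orP; right; apply/existsP; exists v; rewrite vS xv vp.
- by move=> zp; apply/orP; right; apply/existsP; exists z; rewrite zS xz zp.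
- by move=> xp; rewrite /reach2 xp.
Qed.

Lemma reach2_irrefl v : v \in S -> ~~ reach2 v v.
Proof.
have [incS asymS] := independentP indepS.
move=> vS; rewrite /reach2 negb_or {1}/lt_ab negbK incS //=.
by apply/existsP => -[z /and3P [zS vz zv]]; move: (asymS v z vS zS vz); rewrite zv.
Qed.

Lemma rank_lt v p : v \in S -> p \in S -> lt_ab v p -> rank v < rank p.
Proof.
move=> vS pS vp; apply/proper_card/properP; split.
  apply/subsetP => x; rewrite !inE => /andP [xS xv].
  by rewrite xS (reach2_snoc xS vS pS xv vp).
by exists v; rewrite !inE vS /= ?(negbTE (reach2_irrefl vS)) // /reach2 vp.
Qed.

Definition height (x : crown n k) : nat :=
  match x with
  | inl i => \max_(u in S | u.1 == i) (rank u).+1.*2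
  | inr j => (\max_(u in S | ~~ incAB n k u.1 j) (rank u).+1.*2).+1
  end.

Lemma height_crown_lt x y : crown_lt x y -> height x < height y.
Proof.
case: x y => [i|?] [?|j] //= ij; rewrite ltnS.
by apply/bigmax_leqP => u /andP [uS /eqP ui]; apply: leq_bigmax_cond; rewrite uS ui ij.
Qed.

Lemma height_reverse p : p \in S -> height (inr p.2) < height (inl p.1).
Proof.
move=> pS /=.
set lower := \max_(u in S | ~~ _) _; set upper := \max_(u in S | _ == _) _.
have : lower <= (rank p).*2.
  by apply/bigmax_leqP => v /andP [vS vp]; rewrite leq_double; apply: rank_lt.
have : (rank p).+1.*2 <= upper by apply: leq_bigmax_cond; rewrite pS eqxx.
by rewrite -!muln2; lia.
Qed.

Lemma reversible_of_triangle_free : reversible S.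
Proof.
exists (lex_height height); split.
  split; [exact: lex_height_refl | exact: lex_height_anti | exact: lex_height_trans |
          exact: lex_height_total |].
  by move=> x y /height_crown_lt xy; rewrite /lex_height xy.
by move=> p pS; rewrite /lex_height height_reverse.
Qed.

End TriangleFree.

Lemma triangle_of_nonreversible (S : {set P}) : k < n -> independent S -> ~ reversible S ->
  exists p q r, triangle S p q r.
Proof.
move=> k_lt_n indepS nrev.
case: (boolP [exists p, exists q, exists r, triangle S p q r]).
  by move=> /existsP [p /existsP [q /existsP [r pqr]]]; exists p, q, r.
move=> none; case: nrev; apply: reversible_of_triangle_free => // p q r.
apply: contra none => pqr.
by apply/existsP; exists p; apply/existsP; exists q; apply/existsP; exists r.
Qed.

End Crown.

(** * Normal form of a triangle *)

Definition rot N (c : nat) (i : 'I_N) : 'I_N :=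
  Ordinal (ltn_pmod (i + c) (leq_ltn_trans (leq0n i) (ltn_ord i))).

Lemma rot_inj N c : injective (@rot N c).
Proof.
move=> i j /(congr1 val) /eqP; rewrite /= eqn_modDr.
by rewrite !modn_small // => /eqP /val_inj.
Qed.

Section Symmetries.
Variables n k : nat.
Local Notation N := (n + k).
Local Notation P := ('I_N * 'I_N)%type.

Lemma incAB_rot c (i j : 'I_N) : incAB n k (rot c i) (rot c j) = incAB n k i j.
Proof. by rewrite !incAB_cdistn /= cdistn_rot. Qed.

Lemma incAB_twist (i j : 'I_N) : k < N -> incAB n k j (rot k i) = incAB n k i j.
Proof. by move=> k_lt_N; rewrite !incAB_cdistn /= cdistn_twist. Qed.

Definition rotP c (p : P) : P := (rot c p.1, rot c p.2).

(* The order-reversing duality [a_i |-> b_(i+k)], [b_j |-> a_j] of the crown,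
   acting on an incomparable pair [(a, b)] as [(phi b, phi a)]. *)
Definition twist (p : P) : P := (p.2, rot k p.1).

Lemma rotP_inj c : injective (rotP c).
Proof.
by move=> [a b] [a' b'] e; move: (congr1 fst e) (congr1 snd e) => /= /rot_inj -> /rot_inj ->.
Qed.

Lemma twist_inj : injective twist.
Proof.
by move=> [a b] [a' b'] e; move: (congr1 fst e) (congr1 snd e) => /= -> /rot_inj ->.
Qed.

Lemma lt_ab_rotP c : {mono rotP c : u v / lt_ab u v}.
Proof. by move=> u v; rewrite /lt_ab incAB_rot. Qed.

Lemma lt_ab_twist u v : k < N -> lt_ab (twist u) (twist v) = lt_ab v u.
Proof. by move=> k_lt_N; rewrite /lt_ab incAB_twist. Qed.

Lemma independent_imset (f : P -> P) (S : {set P}) :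
  {mono f : p / incAB n k p.1 p.2} -> {mono f : u v / lt_ab u v && lt_ab v u} ->
  independent S -> independent (f @: S).
Proof.
move=> f_inc f_lt [/subsetP sub noedge]; split.
  by apply/subsetP => _ /imsetP [p /sub pS ->]; rewrite inE f_inc; rewrite inE in pS.
move=> _ _ /imsetP [u uS ->] /imsetP [v vS ->].
by rewrite /Gadj /= -/(lt_ab _ _) f_lt; apply: noedge.
Qed.

Lemma independent_rotP c (S : {set P}) : independent S -> independent (rotP c @: S).
Proof. by apply: independent_imset => [p|u v]; rewrite ?incAB_rot ?lt_ab_rotP. Qed.

Lemma independent_twist (S : {set P}) : k < N -> independent S -> independent (twist @: S).
Proof.
by move=> k_lt_N; apply: independent_imset => [p|u v]; rewrite ?incAB_twist ?lt_ab_twist // andbC.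
Qed.

Lemma triangle_rotP c (S : {set P}) p q r :
  triangle S p q r -> triangle (rotP c @: S) (rotP c p) (rotP c q) (rotP c r).
Proof. by rewrite /triangle !lt_ab_rotP !(mem_imset _ _ (@rotP_inj c)). Qed.

Lemma triangle_twist (S : {set P}) p q r : k < N ->
  triangle S p q r -> triangle (twist @: S) (twist p) (twist r) (twist q).
Proof.
move=> k_lt_N; rewrite /triangle !lt_ab_twist // !(mem_imset _ _ twist_inj).
by case/and5P => -> -> -> -> /andP [-> ->].
Qed.

End Symmetries.
Arguments twist {n k} p.

Section NormalForm.
Variables n k : nat.
Hypotheses (k_lt_n : k < n) (k_gt0 : 0 < k).
Local Notation N := (n + k).
Local Notation P := ('I_N * 'I_N)%type.

Definition standard_triangle (a1 b1 a2 b2 a3 : nat) : Prop :=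
  b1 < k < b2 /\ b2 <= 2 * k /\ n + b1 <= b2 /\
  a1 <= b1 /\ b2 - k <= a3 <= k /\ n + b1 <= a2 <= b2.

Definition reflected_triangle (a1 b1 a2 b2 a3 : nat) : Prop :=
  b2 < k < b1 /\ b1 <= 2 * k /\ b1 - k <= a1 <= k /\ b2 + n <= a2 <= b1 /\ a3 <= b2.

Lemma triangle_orientation_cdistn a1 b1 a2 b2 a3 :
  a1 < N -> b1 < N -> a2 < N -> b2 < N -> a3 < N ->
  cdistn N a1 b1 <= k -> cdistn N a2 b2 <= k -> cdistn N a3 k <= k ->
  k < cdistn N a1 b2 -> k < cdistn N a2 k -> k < cdistn N a3 b1 ->
  cdistn N a2 b1 <= k -> cdistn N a3 b2 <= k -> cdistn N a1 k <= k ->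
  standard_triangle a1 b1 a2 b2 a3 \/ reflected_triangle a1 b1 a2 b2 a3.
Proof.
move=> ? ? ? ? ?; rewrite /standard_triangle /reflected_triangle !ltnNge.
have ? : k < N by lia.
case_window (n + k) k a1; case_window (n + k) k a2; case_window (n + k) k a3; lia.
Qed.

Lemma triangle_orientation (S : {set P}) u1 u2 u3 :
  independent S -> triangle S u1 u2 u3 -> u3.2 = k :> nat ->
  standard_triangle u1.1 u1.2 u2.1 u2.2 u3.1 \/ reflected_triangle u1.1 u1.2 u2.1 u2.2 u3.1.
Proof.
move=> /independentP [incS asymS] /and5P [u1S u2S u3S u12 /andP [u23 u31]] u3k.
have u21 := asymS _ _ u1S u2S u12; have u32 := asymS _ _ u2S u3S u23.
have u13 := asymS _ _ u3S u1S u31.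
move: (incS _ u1S) (incS _ u2S) (incS _ u3S) u12 u23 u31 u21 u32 u13.
rewrite /lt_ab !negbK !incAB_cdistn -!ltnNge u3k.
by apply: triangle_orientation_cdistn.
Qed.

Lemma triangle_through_k (S : {set P}) p q r :
  independent S -> triangle S p q r ->
  exists (S' : {set P}) (u1 u2 u3 : P),
    [/\ independent S', #|S'| = #|S|, triangle S' u1 u2 u3 & u3.2 = k :> nat].
Proof.
move=> indepS pqr; pose c := N - r.2 + k.
exists (rotP c @: S), (rotP c p), (rotP c q), (rotP c r); split.
- exact: independent_rotP.
- exact/card_imset/rotP_inj.
- exact: triangle_rotP.
- have r2_lt := ltn_ord r.2; rewrite /= /c.
  have -> : r.2 + (N - r.2 + k) = k + N by lia.
  by rewrite modnDr modn_small //; lia.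
Qed.

(* After the twist, rotating [a_(w2.1)] to position [0] puts the [b] of the
   first pair below [k], which rules out a second reflected orientation. *)
Lemma standard_of_reflected (S : {set P}) w1 w2 w3 :
  independent S -> triangle S w1 w2 w3 -> w3.2 = k :> nat ->
  reflected_triangle w1.1 w1.2 w2.1 w2.2 w3.1 ->
  exists (S' : {set P}) (u1 u2 u3 : P),
    [/\ independent S', #|S'| = #|S|, triangle S' u1 u2 u3,
      u3.2 = k :> nat & standard_triangle u1.1 u1.2 u2.1 u2.2 u3.1].
Proof.
move=> indepS w123 w3k refl; have k_lt_N : k < N by lia.
pose c := N - w2.1; pose f (p : P) := rotP c (twist p).
have indepS' : independent (rotP c @: (twist @: S)).
  exact/independent_rotP/independent_twist.
have u123 : triangle (rotP c @: (twist @: S)) (f w1) (f w3) (f w2).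
  exact/triangle_rotP/triangle_twist.
have a2_lt := ltn_ord w2.1; have a1_lt := ltn_ord w1.1.
have u3k : (f w2).2 = k :> nat.
  rewrite /= /c modnDml.
  have -> : w2.1 + k + (N - w2.1) = k + N by lia.
  by rewrite modnDr modn_small.
have u1_lt_k : (f w1).2 < k.
  move: refl; rewrite /reflected_triangle /= /c => refl.
  rewrite (@modn_small (w1.1 + k)); last lia.
  have -> : w1.1 + k + (N - w2.1) = (w1.1 + k - w2.1) + N by lia.
  by rewrite modnDr modn_small; lia.
exists (rotP c @: (twist @: S)), (f w1), (f w3), (f w2); split => //.
- by rewrite card_imset ?card_imset //; [exact: twist_inj | exact: rotP_inj].
- case: (triangle_orientation indepS' u123 u3k) => // -[].
  by move: u1_lt_k; lia.
Qed.

Lemma standard_triangle_exists (S : {set P}) p q r :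
  independent S -> triangle S p q r ->
  exists (S' : {set P}) (u1 u2 u3 : P),
    [/\ independent S', #|S'| = #|S|, triangle S' u1 u2 u3,
      u3.2 = k :> nat & standard_triangle u1.1 u1.2 u2.1 u2.2 u3.1].
Proof.
move=> indepS /(triangle_through_k indepS) [S1 [w1 [w2 [w3 [indepS1 cardS1 w123 w3k]]]]].
case: (triangle_orientation indepS1 w123 w3k) => [std|refl].
  by exists S1, w1, w2, w3.
have [S' [u1 [u2 [u3 [indepS' cardS' u123 u3k std]]]]] :=
  standard_of_reflected indepS1 w123 w3k refl.
by exists S', u1, u2, u3; rewrite cardS' cardS1.
Qed.

End NormalForm.

(** * Counting in three windows *)

Section Windows.
Variables n k b1 b2 : nat.
Hypothesis layout : k < n /\ n <= 2 * k /\ b1 < k < b2 /\ b2 <= 2 * k /\ n + b1 <= b2.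
Local Notation M := (4 * k + 3 - 2 * n).

Definition window (a : nat) : nat := if a <= b2 - n then 0 else if a <= k + b1 then 1 else 2.

Definition win_lo (i : nat) : nat := if i == 0 then 0 else if i == 1 then b2 - k else n + b1.

Definition win_hi (i : nat) : nat := if i == 0 then b2 - n else if i == 1 then k + b1 else 2 * k.

(* Start of window [i] when the three windows are laid end to end; together
   they have length [M]. *)
Definition win_pos (i : nat) : nat :=
  if i == 0 then 0 else if i == 1 then b2 - n + 1 else (b2 - n + 1) + (2 * k + b1 - b2 + 1).

Definition slot (i t c : nat) : nat := (2 * (win_pos i + t) + c) %% M.

Lemma window_lt3 a : window a < 3.
Proof. by rewrite /window; case: ifP => //; case: ifP. Qed.

Lemma window_bounds a b :
  a <= b <= b2 - n \/ (b2 - k <= a /\ a <= b <= k + b1) \/ (n + b1 <= a /\ a <= b <= 2 * k) ->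
  win_lo (window a) <= a /\ b <= win_hi (window a).
Proof.
rewrite /window /win_lo /win_hi.
by case: (leqP a (b2 - n)) => ? /=; [|case: (leqP a (k + b1)) => ? /=]; lia.
Qed.

Lemma slot_lt i t c : slot i t c < M.
Proof. by rewrite /slot ltn_pmod //; lia. Qed.

Lemma slot_lt_double i t c : i < 3 -> t <= win_hi i - win_lo i -> c <= 1 ->
  2 * (win_pos i + t) + c < M + M.
Proof. by rewrite /win_pos /win_hi /win_lo; case: i => [|[|[|i]]] //= *; lia. Qed.

Lemma slot_inj i t t' c c' : i < 3 ->
  t <= win_hi i - win_lo i -> c <= 1 -> t' <= win_hi i - win_lo i -> c' <= 1 ->
  slot i t c = slot i t' c' -> t = t' /\ c = c'.
Proof.
move=> i_lt3 t_le c_le t'_le c'_le.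
move/eq_modn_lt_double => /(_ (slot_lt_double i_lt3 t_le c_le) (slot_lt_double i_lt3 t'_le c'_le)).
by move: t_le t'_le; rewrite /win_pos /win_hi /win_lo; case: i i_lt3 => [|[|[|i]]] //= *; lia.
Qed.

(* Intervals through points or edges of two windows that share a slot are
   adjacent in [G]. *)
Lemma slot_collision i j a b a' b' t t' c c' : i < j < 3 ->
  win_lo i <= a -> a <= t -> t + c <= b -> b <= win_hi i -> c <= 1 ->
  win_lo j <= a' -> a' <= t' -> t' + c' <= b' -> b' <= win_hi j -> c' <= 1 ->
  slot i (t - win_lo i) c = slot j (t' - win_lo j) c' ->
  k < cdistn (n + k) a b' /\ k < cdistn (n + k) a' b.
Proof.
move=> /andP [ij j_lt3] lo_a a_t t_b b_hi c_le lo_a' a'_t' t'_b' b'_hi c'_le.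
have i_lt3 : i < 3 by lia.
have t_le : t - win_lo i <= win_hi i - win_lo i by lia.
have t'_le : t' - win_lo j <= win_hi j - win_lo j by lia.
move/eq_modn_lt_double => /(_ (slot_lt_double i_lt3 t_le c_le) (slot_lt_double j_lt3 t'_le c'_le)).
move: lo_a b_hi lo_a' b'_hi; rewrite /win_pos /win_hi /win_lo.
case: i j ij j_lt3 {i_lt3 t_le t'_le} => [|[|[|i]]] [|[|[|j]]] //= *.
all: by rewrite /cdistn; do 2 case: ifP => ?; lia.
Qed.

End Windows.

(* With [L = 2k + 2 - n] and [D = d0 + d1 + d2 <= L - 2]: the sum of the
   [d_i * d_i] is at most [D * D], and [D * D + 5 L <= L * L + 6 + D]. *)
Lemma three_windows_bound n k s0 s1 s2 c0 c1 c2 d0 d1 d2 :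
  k < n -> n <= 2 * k ->
  2 * (s0 + d0 + 1) <= (d0 + 2) * (d0 + 1) + 2 * c0 ->
  2 * (s1 + d1 + 1) <= (d1 + 2) * (d1 + 1) + 2 * c1 ->
  2 * (s2 + d2 + 1) <= (d2 + 2) * (d2 + 1) + 2 * c2 ->
  d0 < c0 -> d1 < c1 -> d2 < c2 ->
  c0 + d0 + (c1 + d1) + (c2 + d2) <= 4 * k + 3 - 2 * n ->
  2 * (s0 + s1 + s2) <= 4 + (2 * k + 2 - n) * (2 * k + 1 - n).
Proof.
move=> k_lt_n n_le_2k e0 e1 e2 f0 f1 f2 total.
have -> : 2 * k + 1 - n = (2 * k + 2 - n) - 1 by lia.
have : 4 * k + 3 - 2 * n = 2 * (2 * k + 2 - n) - 1 by lia.
move: (2 * k + 2 - n) => L ML; rewrite ML in total.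
have sq d : (d + 2) * (d + 1) = d * d + 3 * d + 2 by nia.
rewrite !sq in e0 e1 e2.
pose D := d0 + d1 + d2.
have convex : d0 * d0 + d1 * d1 + d2 * d2 <= D * D by rewrite /D; nia.
have DL : D + 2 <= L by rewrite /D; lia.
have quad : D * D + 5 * L <= L * L + 6 + D.
  have [e ->] : exists e, L = D + 2 + e by exists (L - (D + 2)); lia.
  by case: e => [|e]; nia.
have -> : L * (L - 1) = L * L - L by rewrite mulnBr muln1.
move: convex quad; rewrite /D; lia.
Qed.

Lemma card_split3 (T : finType) (A : {set T}) (f : T -> nat) : (forall x, f x < 3) ->
  #|A| = #|[set x in A | f x == 0]| + #|[set x in A | f x == 1]| + #|[set x in A | f x == 2]|.
Proof.
move=> f_lt3; rewrite -(cardsID [set x | f x == 0] A) -(cardsID [set x | f x == 1] (A :\: _)).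
rewrite addnA; congr (_ + _ + _); apply: eq_card => x; rewrite !inE;
  by case: (x \in A); rewrite ?andbF //=; have := f_lt3 x; case: (f x) => [|[|[|]]].
Qed.

Section Count.
Variables n k : nat.
Hypotheses (k_lt_n : k < n) (n_le_2k : n <= 2 * k).
Local Notation N := (n + k).
Local Notation P := ('I_N * 'I_N)%type.
Variables (S : {set P}) (u1 u2 u3 : P).
Hypotheses (indepS : independent S) (u123 : triangle S u1 u2 u3) (u3k : u3.2 = k :> nat)
  (std : standard_triangle n k u1.1 u1.2 u2.1 u2.2 u3.1).
Local Notation window := (window n k u1.2 u2.2).
Local Notation lo := (win_lo n k u1.2 u2.2).
Local Notation hi := (win_hi n k u1.2 u2.2).
Local Notation slot := (slot n k u1.2 u2.2).

Lemma layout_std : k < n /\ n <= 2 * k /\ u1.2 < k < u2.2 /\ u2.2 <= 2 * k /\ n + u1.2 <= u2.2.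
Proof. by move: std; rewrite /standard_triangle; lia. Qed.

Lemma windows_of_triangle : [/\ window u1.1 = 0, window u3.1 = 1 & window u2.1 = 2].
Proof. by move: std; rewrite /standard_triangle /window => ?; split; repeat case: ifP; lia. Qed.

Lemma window_cdistn a b a1 b1 a2 b2 a3 : standard_triangle n k a1 b1 a2 b2 a3 ->
  a < N -> b < N -> a2 < N -> cdistn N a b <= k ->
  cdistn N a b1 <= k \/ cdistn N a1 b <= k -> cdistn N a b2 <= k \/ cdistn N a2 b <= k ->
  cdistn N a k <= k \/ cdistn N a3 b <= k ->
  a <= b <= b2 - n \/ (b2 - k <= a /\ a <= b <= k + b1) \/ (n + b1 <= a /\ a <= b <= 2 * k).
Proof.
rewrite /standard_triangle => -[? [? [? [? [? ?]]]]] ? ? ?.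
have ? : k < N by lia.
rewrite (@cdistn_le_inside N k a1) ?(@cdistn_le_inside N k a3) ?(@cdistn_le_wrap N k a2); try lia.
by case_window (n + k) k a; lia.
Qed.

(* Non-adjacency to [u1], [u2] and [u3] in [G] confines [w] to a window. *)
Lemma pair_in_window w : w \in S ->
  lo (window w.1) <= w.1 /\ w.1 <= w.2 /\ w.2 <= hi (window w.1).
Proof.
move=> wS; have [incS asymS] := independentP indepS.
case/and5P: u123 => u1S u2S u3S _ _.
have near u : u \in S -> cdistn N w.1 u.2 <= k \/ cdistn N u.1 w.2 <= k.
  move=> uS; case: (boolP (lt_ab w u)) => [/(asymS _ _ wS uS) | ].
    by rewrite /lt_ab negbK incAB_cdistn; right.
  by rewrite /lt_ab negbK incAB_cdistn; left.
have := window_cdistn std (ltn_ord w.1) (ltn_ord w.2) (ltn_ord u2.1).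
rewrite -incAB_cdistn incS // => /(_ isT (near _ u1S) (near _ u2S)).
have near3 := near _ u3S; rewrite u3k in near3; move=> /(_ near3) inside.
have [lo_w w_hi] := window_bounds layout_std inside.
by split => //; case: inside; lia.
Qed.

Definition part (i : nat) : {set P} := [set w in S | window w.1 == i].

Lemma card_parts : #|S| = #|part 0| + #|part 1| + #|part 2|.
Proof. by apply: card_split3 => w; apply: window_lt3. Qed.

Lemma in_part i w : w \in part i ->
  [/\ w \in S, window w.1 = i, lo i <= w.1, w.1 <= w.2 & w.2 <= hi i].
Proof. by rewrite inE => /andP [wS /eqP <-]; have [? [? ?]] := pair_in_window wS. Qed.

Local Notation m := (4 * k + 2 - 2 * n).

(* Here [m.+1 = M]; covered points take even slots, covered edges odd ones. *)
Definition slots (i : nat) : {set 'I_m.+1} :=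
  [set inord (slot i (t - lo i) 0) | t : 'I_N in covered (part i)] :|:
  [set inord (slot i (t - lo i) 1) | t : 'I_N in covered_edges (part i)].

Lemma inord_slot i t c : (inord (slot i t c) : 'I_m.+1) = slot i t c :> nat.
Proof.
by apply: inordK; have := slot_lt layout_std i t c; lia.
Qed.

Lemma covered_part i (t : 'I_N) : t \in covered (part i) ->
  exists2 w, w \in part i & w.1 <= t /\ t + 0 <= w.2.
Proof. by rewrite inE => /existsP [w /andP [wX /andP [wt tw]]]; exists w; rewrite ?addn0. Qed.

Lemma covered_edges_part i (t : 'I_N) : t \in covered_edges (part i) ->
  exists2 w, w \in part i & w.1 <= t /\ t + 1 <= w.2.
Proof. by rewrite inE => /existsP [w /andP [wX /andP [wt tw]]]; exists w; rewrite ?addn1. Qed.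

Lemma mem_slots i g : g \in slots i -> exists w t c,
  [/\ w \in part i, c <= 1, w.1 <= t, t + c <= w.2 & g = slot i (t - lo i) c :> nat].
Proof.
rewrite inE => /orP [] /imsetP [t].
  by move=> /covered_part [w wX [wt tw]] ->; exists w, t, 0; rewrite inord_slot.
by move=> /covered_edges_part [w wX [wt tw]] ->; exists w, t, 1; rewrite inord_slot.
Qed.

Lemma card_slots i : i < 3 -> #|slots i| = #|covered (part i)| + #|covered_edges (part i)|.
Proof.
move=> i_lt3.
have span (t : 'I_N) c : (exists2 w, w \in part i & w.1 <= t /\ t + c <= w.2) ->
    lo i <= t /\ t - lo i <= hi i - lo i.
  by case=> w /in_part [_ _ lo_w w12 w_hi] [wt tw]; lia.
have slot_eq (t t' : 'I_N) c c' : c <= 1 -> c' <= 1 ->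
    (exists2 w, w \in part i & w.1 <= t /\ t + c <= w.2) ->
    (exists2 w, w \in part i & w.1 <= t' /\ t' + c' <= w.2) ->
    (inord (slot i (t - lo i) c) : 'I_m.+1) = inord (slot i (t' - lo i) c') -> t = t' /\ c = c'.
  move=> c_le c'_le /span [lo_t t_le] /span [lo_t' t'_le] /(congr1 val).
  rewrite /= !inord_slot => /(slot_inj layout_std i_lt3 t_le c_le t'_le c'_le) [tt' ->].
  by split=> //; apply: ord_inj; lia.
rewrite cardsU (_ : _ :&: _ = set0) ?cards0 ?subn0.
  congr (_ + _); apply: card_in_imset => t t'.
  - by move=> /covered_part tX /covered_part t'X /(slot_eq _ _ 0 0 isT isT tX t'X) [].
  - by move=> /covered_edges_part tX /covered_edges_part t'X /(slot_eq _ _ 1 1 isT isT tX t'X) [].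
apply/setP => g; rewrite !inE; apply/negbTE/negP.
case/andP => /imsetP [t /covered_part tX ->] /imsetP [t' /covered_edges_part t'X].
by move=> /(slot_eq _ _ 0 1 isT isT tX t'X) [].
Qed.

Lemma slots_disjoint i j : i < j < 3 -> slots i :&: slots j = set0.
Proof.
move=> ij; have [_ asymS] := independentP indepS.
apply/setP => g; rewrite in_setI in_set0; apply/negbTE/negP => /andP [].
move=> /mem_slots [w [t [c [/in_part [wS _ lo_w _ w_hi] c_le wt tw gt]]]].
move=> /mem_slots [w' [t' [c' [/in_part [w'S _ lo_w' _ w'_hi] c'_le w't' t'w' gt']]]].
have [ww' w'w] := slot_collision layout_std ij lo_w wt tw w_hi c_le lo_w' w't' t'w' w'_hi c'_le
  (etrans (esym gt) gt').
have := asymS _ _ wS w'S; rewrite /lt_ab !incAB_cdistn negbK -ltnNge ww' => /(_ isT).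
by rewrite leqNgt w'w.
Qed.

Lemma card_slots_le : #|slots 0| + #|slots 1| + #|slots 2| <= 4 * k + 3 - 2 * n.
Proof.
have -> : #|slots 0| + #|slots 1| + #|slots 2| = #|slots 0 :|: slots 1 :|: slots 2|.
  by rewrite !cardsU setIUl !slots_disjoint // setU0 !cards0 !subn0.
by apply: leq_trans (max_card _) _; rewrite card_ord; lia.
Qed.

Lemma card_le_of_standard_triangle : 2 * #|S| <= 4 + (2 * k + 2 - n) * (2 * k + 1 - n).
Proof.
have wf i (p : P) : p \in part i -> p.1 <= p.2 by case/in_part.
have [win1 win3 win2] := windows_of_triangle.
case/and5P: u123 => u1S u2S u3S _ _.
have in0 : u1 \in part 0 by rewrite inE u1S win1.
have in1 : u3 \in part 1 by rewrite inE u3S win3.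
have in2 : u2 \in part 2 by rewrite inE u2S win2.
rewrite card_parts; have := card_slots_le; rewrite !card_slots //.
apply: three_windows_bound => //; try exact: card_intervals_bound (wf _).
- exact: card_covered_edges_lt in0 (wf 0).
- exact: card_covered_edges_lt in1 (wf 1).
- exact: card_covered_edges_lt in2 (wf 2).
Qed.

End Count.

Theorem theorem1p5 (n k : nat) (S : {set 'I_(n + k) * 'I_(n + k)}) :
  3 <= n -> k < n -> n <= 2 * k ->
  independent S -> ~ reversible S ->
  2 * #|S| <= 4 + (2 * k + 2 - n) * (2 * k + 1 - n).
Proof.
move=> _ k_lt_n n_le_2k indepS nrev.
have k_gt0 : 0 < k by lia.
have [p [q [r pqr]]] := triangle_of_nonreversible k_lt_n indepS nrev.
have [S' [u1 [u2 [u3 [indepS' <- u123 u3k std]]]]] :=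
  standard_triangle_exists k_lt_n k_gt0 indepS pqr.
exact: (card_le_of_standard_triangle k_lt_n n_le_2k indepS' u123 u3k std).
Qed.
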